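(* Let $\delta>1$, $\gamma>0$, $0<A_u<A_s$ and $0<\rho_u<\rho_s$. For $L>0$ define \[ s^*(L)=\left[\gamma^{-\delta}A_s^{\delta-1}L\right]^{\frac{1}{1+\delta\rho_s}},\qquad u^*(L)=\left[\gamma^{-\delta}A_u^{\delta-1}L\right]^{\frac{1}{1+\delta\rho_u}}. \] Then \[ \frac{\partial}{\partial L}\left[\frac{s^*(L)}{u^*(L)}\right]<0\quad\text{for all }L>0, \] i.e. an increase in the demand for legal services tilts the composition of employed legal workers towards unskilled workers.
   Context: Model of the legal labor market: skilled ($s$) and unskilled ($u$) workers supply labor $j=(w_j/\gamma)^{1/\rho_j}$, where $1/\rho_j$ is the Frisch elasticity of labor supply of type $j$; a competitive firm produces legal services $L=\left[(A_u u)^{\frac{\delta-1}{\delta}}+(A_s s)^{\frac{\delta-1}{\delta}}\right]^{\frac{\delta}{\delta-1}}$ paying marginal products $w_j=A_j^{\frac{\delta-1}{\delta}}(L/j)^{1/\delta}$, with $L>0$ treated as an exogenous demand parameter. $s^*(L),u^*(L)$ are the resulting equilibrium employment levels. The hypotheses $\rho_u<\rho_s$ (skilled labor supply less elastic) and $A_u<A_s$ (skilled labor more productive) are the paper's standing assumptions. *)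

From Stdlib Require Import Reals.
From Coquelicot Require Import Coquelicot.
Open Scope R_scope.

Definition sstar (delta gamma A_s rho_s L : R) : R :=
  Rpower (Rpower gamma (- delta) * Rpower A_s (delta - 1) * L) (1 / (1 + delta * rho_s)).

Definition ustar (delta gamma A_u rho_u L : R) : R :=
  Rpower (Rpower gamma (- delta) * Rpower A_u (delta - 1) * L) (1 / (1 + delta * rho_u)).

(* Both employment levels are power functions of L, s*(L) = (c_s L)^a and
   u*(L) = (c_u L)^b with a = 1/(1 + delta rho_s) and b = 1/(1 + delta rho_u).
   The elasticity of the ratio s*/u* with respect to L is therefore the
   constant a - b, which is negative exactly because rho_u < rho_s. *)
From Stdlib Require Import Reals Lra.
From Coquelicot Require Import Coquelicot.
Open Scope R_scope.

Lemma Rpower_pos (x e : R) : 0 < Rpower x e.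
Proof. apply exp_pos. Qed.

Lemma is_derive_Rpower_scale (c e x : R) :
  0 < c -> 0 < x ->
  is_derive (fun y => Rpower (c * y) e) x (e / x * Rpower (c * x) e).
Proof.
  intros Hc Hx; unfold Rpower.
  auto_derive; [nra | field; lra].
Qed.

Lemma is_derive_Rpower_scale_ratio (c d a b x : R) :
  0 < c -> 0 < d -> 0 < x ->
  is_derive (fun y => Rpower (c * y) a / Rpower (d * y) b) x
    ((a - b) / x * (Rpower (c * x) a / Rpower (d * x) b)).
Proof.
  intros Hc Hd Hx.
  pose proof (Rpower_pos (d * x) b) as Hden.
  replace ((a - b) / x * _)
    with ((a / x * Rpower (c * x) a * Rpower (d * x) b
           - Rpower (c * x) a * (b / x * Rpower (d * x) b)) / Rpower (d * x) b ^ 2)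
    by (field; lra).
  apply (is_derive_div (fun y => Rpower (c * y) a) (fun y => Rpower (d * y) b)).
  - now apply is_derive_Rpower_scale.
  - now apply is_derive_Rpower_scale.
  - lra.
Qed.

Lemma labor_supply_exponent_lt (delta rho_u rho_s : R) :
  0 < delta -> 0 < rho_u -> rho_u < rho_s ->
  1 / (1 + delta * rho_s) < 1 / (1 + delta * rho_u).
Proof.
  intros Hd Hu Hus; unfold Rdiv; rewrite !Rmult_1_l.
  apply Rinv_0_lt_contravar; nra.
Qed.

Theorem proposition1 (delta gamma A_u A_s rho_u rho_s : R)
  (Hdelta : 1 < delta) (Hgamma : 0 < gamma)
  (HAu : 0 < A_u) (HA : A_u < A_s)
  (Hrhou : 0 < rho_u) (Hrho : rho_u < rho_s) :
  forall L : R, 0 < L ->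
    ex_derive (fun x => sstar delta gamma A_s rho_s x / ustar delta gamma A_u rho_u x) L /\
    Derive (fun x => sstar delta gamma A_s rho_s x / ustar delta gamma A_u rho_u x) L < 0.
Proof.
  intros L HL; unfold sstar, ustar.
  set (a := 1 / (1 + delta * rho_s)); set (b := 1 / (1 + delta * rho_u)).
  assert (Hab : a < b) by (apply labor_supply_exponent_lt; lra).
  pose proof (is_derive_Rpower_scale_ratio
    (Rpower gamma (- delta) * Rpower A_s (delta - 1))
    (Rpower gamma (- delta) * Rpower A_u (delta - 1)) a b L
    (Rmult_lt_0_compat _ _ (Rpower_pos _ _) (Rpower_pos _ _))
    (Rmult_lt_0_compat _ _ (Rpower_pos _ _) (Rpower_pos _ _)) HL) as Hderiv.
  split; [eexists; exact Hderiv |].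
  erewrite is_derive_unique by exact Hderiv.
  apply Rmult_neg_pos.
  - apply Rdiv_neg_pos; lra.
  - apply Rdiv_lt_0_compat; apply Rpower_pos.
Qed.
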